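(* Let $K, C \in \mathbb{N}$ be positive integers, let $p \in \mathbb{Q}_{>0}$, let $q_1, q_2 \in \mathbb{Q}$, and let $\varphi, \psi : \mathbb{Q} \to \mathbb{Z}$ be functions that are antiperiodic with antiperiod $C$ on the grid $\frac{C}{K}\mathbb{Z}$, i.e. $\varphi(x + C) = -\varphi(x)$ and $\psi(x+C) = -\psi(x)$ for all $x \in \frac{C}{K}\mathbb{Z}$. For nonzero $x \in \frac{1}{K}\mathbb{Z}$ define \[ s_d(x) = \frac{p^x + q_1 \varphi(Cx) + q_2 \psi(Cx)}{x}, \] where $p^x$ denotes the positive real power. Let $t = \frac{i}{K}$ with $i \in \mathbb{Z}\setminus\{0\}$, and let $u, v$ be nonnegative integers such that the four points $t,\ t+2v+1,\ t+2u,\ t+2u+2v+1$ are all nonzero. Put \[ s_0 = s_d(t),\quad s_1 = s_d(t+2v+1),\quad s_2 = s_d(t+2u),\quad s_3 = s_d(t+2u+2v+1). \] Then \[ \frac{s_0 \cdot t + s_1 \cdot (t + 2v + 1)}{s_2 \cdot (t + 2u) + s_3 \cdot (t + 2u + 2v + 1)} = \frac{1}{p^{2u}}. \]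
   Context: The functions $\varphi,\psi$ play the role of discrete ''oscillators''; antiperiodicity with antiperiod $C$ means a shift of the argument by $C$ flips the sign. The function $s_d$ is called the discrete generating function. *)

From HB Require Import structures.
From mathcomp Require Import all_boot all_order all_algebra.
From mathcomp Require Import all_classical all_reals all_analysis.
Set Implicit Arguments. Unset Strict Implicit. Unset Printing Implicit Defensive.
Import Order.TTheory GRing.Theory Num.Theory.
Local Open Scope ring_scope.

Definition antiperiodic_on_grid (K C : nat) (f : rat -> int) : Prop :=
  forall m : int,
    f ((C%:R / K%:R) * m%:~R + C%:R) = - f ((C%:R / K%:R) * m%:~R).

Definition s_d (R : realType) (C : nat) (p q1 q2 : rat) (phi psi : rat -> int)
  (x : rat) : R :=
  ((ratr p : R) `^ (ratr x)
    + ratr q1 * ((phi (C%:R * x))%:~R)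
    + ratr q2 * ((psi (C%:R * x))%:~R)) / ratr x.

From HB Require Import structures.
From mathcomp Require Import all_boot all_order all_algebra.
From mathcomp Require Import all_classical all_reals all_analysis.
From mathcomp Require Import ring.
Import Order.TTheory GRing.Theory Num.Theory.
Local Open Scope ring_scope.

(* For t on the grid
   (1/K)Z, shifting t by an odd integer flips the signs of phi(Ct) and psi(Ct), so
   the oscillating parts cancel in s_d(t) t + s_d(t + 2v + 1)(t + 2v + 1), which
   equals p^t (1 + p^(2v+1)).  The same computation at t + 2u gives p^(2u) times
   that value, whence the ratio 1 / p^(2u). *)

Section Antiperiodic.

Variables (K C : nat) (f : rat -> int).
Hypotheses (hK : (0 < K)%N) (hf : antiperiodic_on_grid K C f).

Lemma antiperiodic_on_grid_natD (m : int) (n : nat) :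
  f (C%:R * (m%:~R / K%:R + n%:R)) = (-1) ^+ n * f (C%:R * (m%:~R / K%:R)).
Proof.
have KN : (K%:R : rat) != 0 by rewrite pnatr_eq0 -lt0n.
have gridE (k : int) : C%:R * (k%:~R / K%:R) = (C%:R / K%:R) * k%:~R :> rat.
  by rewrite mulrA mulrAC.
elim: n => [|n IH]; first by rewrite addr0 expr0 mul1r.
have -> : C%:R * (m%:~R / K%:R + n.+1%:R)
          = (C%:R / K%:R) * (m + n%:Z * K%:Z)%:~R + (C%:R : rat).
  by rewrite intrD intrM -addn1 natrD /=; field.
rewrite hf -gridE.
have -> : ((m + n%:Z * K%:Z)%:~R / K%:R : rat) = m%:~R / K%:R + n%:R.
  by rewrite intrD intrM /=; field.
by rewrite IH exprS mulN1r mulNr.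
Qed.

Lemma antiperiodic_on_grid_oddD (m : int) (w : nat) :
  f (C%:R * (m%:~R / K%:R + (2 * w + 1)%:R)) = - f (C%:R * (m%:~R / K%:R)).
Proof.
by rewrite antiperiodic_on_grid_natD exprD exprM sqrrN expr1n expr1 mul1r mulN1r.
Qed.

End Antiperiodic.

Section DiscreteGeneratingFunction.

Variables (R : realType) (K C : nat) (p q1 q2 : rat) (phi psi : rat -> int).
Hypotheses (hK : (0 < K)%N) (hp : 0 < p).
Hypotheses (hphi : antiperiodic_on_grid K C phi) (hpsi : antiperiodic_on_grid K C psi).

Let s := s_d R C p q1 q2 phi psi.

Lemma s_dK (x : rat) : x != 0 ->
  s x * ratr x = (ratr p : R) `^ (ratr x)
                 + ratr q1 * (phi (C%:R * x))%:~R + ratr q2 * (psi (C%:R * x))%:~R.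
Proof. by move=> x0; rewrite /s /s_d divfK // fmorph_eq0. Qed.

Lemma powR_ratrD (x y : rat) :
  (ratr p : R) `^ (ratr (x + y)) = (ratr p : R) `^ (ratr x) * (ratr p : R) `^ (ratr y).
Proof.
have p0 : (ratr p : R) != 0 by rewrite gt_eqF // ltr0q.
by rewrite rmorphD powRD // p0 implybT.
Qed.

Lemma s_d_odd_shift_sum (m : int) (w : nat) :
  let x : rat := m%:~R / K%:R in
  x != 0 -> x + (2 * w + 1)%:R != 0 ->
  s x * ratr x + s (x + (2 * w + 1)%:R) * ratr (x + (2 * w + 1)%:R)
  = (ratr p : R) `^ (ratr x) * (1 + (ratr p : R) `^ (2 * w + 1)%:R).
Proof.
move=> x x0 x1; rewrite !s_dK // !antiperiodic_on_grid_oddD // powR_ratrD ratr_nat.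
rewrite !intrN; ring.
Qed.

End DiscreteGeneratingFunction.

Theorem mainTheorem1 (R : realType) (K C : nat) (hK : (0 < K)%N) (hC : (0 < C)%N)
  (p q1 q2 : rat) (hp : 0 < p) (phi psi : rat -> int)
  (hphi : antiperiodic_on_grid K C phi) (hpsi : antiperiodic_on_grid K C psi)
  (i : int) (hi : i != 0) (u v : nat) :
  let t : rat := i%:~R / K%:R in
  let x0 : rat := t in
  let x1 : rat := t + (2 * v + 1)%:R in
  let x2 : rat := t + (2 * u)%:R in
  let x3 : rat := t + (2 * u + 2 * v + 1)%:R in
  x0 != 0 -> x1 != 0 -> x2 != 0 -> x3 != 0 ->
  let s := s_d R C p q1 q2 phi psi in
  (s x0 * ratr x0 + s x1 * ratr x1) / (s x2 * ratr x2 + s x3 * ratr x3)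
  = 1 / ((ratr p : R) `^ (2 * u)%:R).
Proof.
move=> t x0 x1 x2 x3 h0 h1 h2 h3 s.
have KN : (K%:R : rat) != 0 by rewrite pnatr_eq0 -lt0n.
have x2E : x2 = (i + (2 * u * K)%N%:Z)%:~R / K%:R.
  by rewrite /x2 /t intrD /= natrM; field.
have x3E : x3 = x2 + (2 * v + 1)%:R by rewrite /x3 /x2 -addrA -natrD addnA.
rewrite x3E x2E in h3 *; rewrite x2E in h2.
rewrite !s_d_odd_shift_sum // -x2E /x2 powR_ratrD // rmorph_nat -/t.
set a := _ `^ ratr t; set b := _ `^ (2 * u)%:R; set c := 1 + _.
have pos (y : R) : 0 < (ratr p : R) `^ y by rewrite powR_gt0 // ltr0q.
have [a0 b0 c0] : [/\ a != 0, b != 0 & c != 0].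
  by rewrite !gt_eqF ?addr_gt0 ?pos.
by field; rewrite a0 b0 c0.
Qed.
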